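(* Let $F$ be an infinite field of characteristic $p>2$ and $k$ a positive integer. Let $x^i_1,\dots,x^i_{h_i}$ ($i=1,\dots,k$) be distinct variables, $x^i_t$ of degree $i$, and consider the graded monomial $T=(x^1_1)^{r^1_1}\cdots(x^1_{h_1})^{r^1_{h_1}}\cdots(x^k_1)^{r^k_1}\cdots(x^k_{h_k})^{r^k_{h_k}}$ with non-negative integer exponents. Let $r=\max\{r^i_t\}$. If $p>r$, then $T$ is not a $\mathbb{Z}$-graded identity of $E^{\infty}$.
   Context: $L$ is a vector space over $F$ with basis $e_1,e_2,\dots$, $E$ its unital Grassmann algebra (basis $1$ and $e_{i_1}\cdots e_{i_k}$, $i_1<\cdots<i_k$, with $e_ie_j=-e_je_i$). $E^{\infty}$ is $E$ with the $\mathbb{Z}$-grading induced by $\|e_i\|=0$ for $i$ even and $\|e_i\|=1$ for $i$ odd (basis monomials get the sum of degrees of their factors; $1$ has degree $0$). A graded polynomial is a graded identity of $A$ if it vanishes whenever each variable is replaced by an element of the homogeneous component of $A$ of that variable's degree. *)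

From HB Require Import structures.
From mathcomp Require Import all_boot all_order all_algebra.
From mathcomp Require Import finmap.
Set Implicit Arguments. Unset Strict Implicit. Unset Printing Implicit Defensive.
Import Order.TTheory GRing.Theory Num.Theory.
Local Open Scope ring_scope.
Local Open Scope fset_scope.

(* CONVENTION: the generator e_(n+1) is encoded by the natural number n.
   A basis monomial e_{i_1}...e_{i_k} (i_1 < ... < i_k) is encoded by the
   finite set of (encoded) indices; the empty set encodes 1.
   An element of E is a finitely supported function from basis monomials
   to F (its coordinates). *)
Definition Grass (F : fieldType) := {fsfun {fset nat} -> F with 0}.

Definition ginv (A B : {fset nat}) : nat :=
  (\sum_(x <- A) \sum_(y <- B) (y < x))%N.

(* e_A * e_B = (-1)^(ginv A B) e_(A u B) if A, B disjoint, 0 otherwise *)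
Definition gcoef (F : fieldType) (a b : Grass F) (S : {fset nat}) : F :=
  \sum_(A <- finsupp a) \sum_(B <- finsupp b)
     (if (A `&` B == fset0) && (A `|` B == S)
      then (-1) ^+ ginv A B * a A * b B else 0).

Definition gmul (F : fieldType) (a b : Grass F) : Grass F :=
  [fsfun S in [fset A `|` B | A in finsupp a, B in finsupp b] => gcoef a b S].

Definition gone (F : fieldType) : Grass F :=
  [fsfun S in [fset (fset0 : {fset nat})] => (1 : F)].

Definition gexp (F : fieldType) (x : Grass F) (n : nat) : Grass F :=
  iter n (gmul x) (gone F).

(* Z-grading of E^infty: ||e_j|| = 1 if j odd, 0 if j even.
   With the encoding n <-> e_(n+1), e_(n+1) has degree 1 iff n is even. *)
Definition gdeg (S : {fset nat}) : nat := size [seq n <- S | ~~ odd n].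

Definition ghomog (F : fieldType) (d : nat) (x : Grass F) : Prop :=
  forall S, S \in finsupp x -> gdeg S = d.

(* Value of the graded monomial
   T = (x^1_1)^{r^1_1} ... (x^1_{h_1})^{r^1_{h_1}} ... (x^k_1)^{r^k_1} ... (x^k_{h_k})^{r^k_{h_k}}
   under the substitution x^i_{t+1} |-> a i t (t is 0-based here),
   multiplied left to right in the stated order. *)
Definition gmonomial_eval (F : fieldType) (k : nat) (h : nat -> nat)
  (r : nat -> nat -> nat) (a : nat -> nat -> Grass F) : Grass F :=
  foldl (@gmul F) (gone F)
    (flatten [seq [seq gexp (a i t) (r i t) | t <- iota 0 (h i)] | i <- iota 1 k]).

Definition gzero (F : fieldType) : Grass F := [fsfun S in fset0 => (0 : F)].

From HB Require Import structures.
From mathcomp Require Import all_boot all_order all_algebra.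
From mathcomp Require Import finmap.
Import Order.TTheory GRing.Theory Num.Theory.

(* Monomials of E built from adjacent pairs e_(2q+1) e_(2q+2) contain one generator
   of each parity, so a product of i such pairs has degree i, and such a monomial
   multiplies without sign change against any disjoint monomial.  Give the variable
   x^i_t the value b_1 + ... + b_r, where r = r^i_t and the b_j are products of i
   pairs, all the blocks used for all the variables being pairwise disjoint.  A product
   of blocks vanishes unless the blocks are distinct, hence
   (b_1 + ... + b_r)^r = r! b_1 ... b_r, and T evaluates to the product of the
   factorials r^i_t! times a basis monomial.  This is nonzero because every exponent
   is smaller than the characteristic p. *)

Local Open Scope ring_scope.

Section GrassmannProduct.
Local Open Scope fset_scope.
Context {F : fieldType}.
Implicit Types (A B S : {fset nat}) (a b : Grass F).

Lemma disjoint_fsetU_eq (K : choiceType) (A B S : {fset K}) :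
  (A `&` B == fset0) && (A `|` B == S) = (A `<=` S) && (B == S `\` A).
Proof.
apply/andP/andP => [[/eqP AB0 /eqP <-]|[/fsubsetP AS /eqP ->]].
  split; first exact: fsubsetUl.
  apply/eqP/fsetP => x; rewrite !inE; case: (boolP (x \in A)) => //= xA.
  by apply/negbTE/negP => xB; have := in_fsetI A B x; rewrite xA xB AB0 inE.
by split; apply/eqP/fsetP => x; rewrite !inE; case: (boolP (x \in A)) => //= /AS.
Qed.

Lemma gmulE {K : {fset {fset nat}}} {a} : finsupp a `<=` K -> forall b S,
  gmul a b S = \sum_(A <- K) (if A `<=` S then
     (-1) ^+ ginv A (S `\` A) * a A * b (S `\` A) else 0).
Proof.
move=> suppK b S; rewrite -(big_fset_incl _ suppK); last first.
  by move=> A _ /fsfun_dflt ->; case: ifP; rewrite ?mulr0 ?mul0r.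
rewrite /gmul fsfun_fun /gcoef; case: ifP => [_|/negbT S_notin].
  apply: eq_bigr => A _; under eq_bigr => B _ do rewrite disjoint_fsetU_eq.
  case: ifP => AS /=; last by rewrite big1.
  rewrite -big_mkcond /=.
  case: (boolP (S `\` A \in finsupp b)) => [SA|/fsfun_dflt b0].
    by rewrite -big_filter filter_pred1_uniq ?fset_uniq // big_seq1.
  by rewrite b0 mulr0 big1 // => B /eqP ->; rewrite b0 mulr0.
symmetry; rewrite big_seq big1 // => A Aa; case: ifP => // AS.
case: (boolP (S `\` A \in finsupp b)) => [SA|/fsfun_dflt ->]; last by rewrite mulr0.
case/negP: S_notin; apply/imfset2P; exists A => //; exists (S `\` A) => //.
by apply/fsetP => x; rewrite !inE; case: (boolP (x \in A)) => // /(fsubsetP AS).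
Qed.

Definition gmono A (c : F) : Grass F := [fsfun S in [fset A] => c].

Lemma gmonoE A c S : gmono A c S = if S == A then c else 0.
Proof. by rewrite fsfun_fun in_fset1. Qed.

Lemma finsupp_gmono A c : finsupp (gmono A c) `<=` [fset A].
Proof. exact: finsupp_sub. Qed.

Lemma gone_gmono : gone F = gmono fset0 1.
Proof. by []. Qed.

Lemma gmono_eq_gzero A c : gmono A c = gzero F -> c = 0.
Proof. by move/fsfunP/(_ A); rewrite gmonoE eqxx fsfun_fun. Qed.

End GrassmannProduct.

Section Paired.
Local Open Scope fset_scope.

Definition paired (A : {fset nat}) := forall n, (n.*2 \in A) = (n.*2.+1 \in A).

Lemma paired_fsetU A B : paired A -> paired B -> paired (A `|` B).
Proof. by move=> pA pB n; rewrite !inE pA pB. Qed.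

Lemma paired_bigfcup (I : eqType) (s : seq I) (U : I -> {fset nat}) :
  {in s, forall i, paired (U i)} -> paired (\bigcup_(i <- s) U i).
Proof.
move=> pU n; apply/bigfcupP/bigfcupP => -[i /andP[si _] xi];
  by exists i; rewrite ?si // ?pU // -?pU.
Qed.

Lemma sumn_iota_double (g : nat -> nat) N :
  (\sum_(x <- iota 0 N.*2) g x = \sum_(n <- iota 0 N) (g n.*2 + g n.*2.+1))%N.
Proof.
elim: N => [|N IH]; first by rewrite !big_nil.
rewrite doubleS -addn2 -[N.+1]addn1 !iotaD !big_cat IH /= !add0n.
by rewrite !big_cons !big_nil !addn0.
Qed.

Lemma sumn_fset_iota (A : {fset nat}) (g : nat -> nat) M :
  (forall x, x \in A -> x < M)%N ->
  (\sum_(x <- A) g x = \sum_(x <- iota 0 M) (if x \in A then g x else 0))%N.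
Proof.
move=> AM; rewrite -big_mkcond -[in RHS]big_filter; apply/perm_big/uniq_perm.
- exact: fset_uniq.
- by rewrite filter_uniq ?iota_uniq.
by move=> x; rewrite mem_filter mem_iota /=; case: (boolP (x \in A)) => // /AM.
Qed.

(* Inversions of [B] against a pair [{2n, 2n+1}] of [A] come in twos, since no
   element of [B] lies strictly between [2n] and [2n+1]. *)
Lemma ginv_paired_even {A B : {fset nat}} :
  paired A -> [disjoint A & B] -> ~~ odd (ginv A B).
Proof.
move=> pA /fdisjointP AB; set M := (\sum_(x <- A) x).+1.
rewrite /ginv (@sumn_fset_iota _ _ M.*2); last first.
  move=> x xA; rewrite -addnn ltn_addr // ltnS.
  by rewrite (big_rem x xA) leq_addr.
rewrite sumn_iota_double -dvdn2; apply: dvdn_sum => n _.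
rewrite -pA; case: (boolP (n.*2 \in A)) => // nA.
suff -> : (\sum_(y <- B) (y < n.*2.+1) = \sum_(y <- B) (y < n.*2))%N.
  by rewrite addnn -mul2n dvdn_mulr.
rewrite big_seq [RHS]big_seq; apply: eq_bigr => y yB.
by rewrite ltnS leq_eqVlt; case: eqP => // ny; move: (AB _ nA); rewrite -ny yB.
Qed.

Lemma signr_ginv_paired {F : fieldType} {A B : {fset nat}} :
  paired A -> [disjoint A & B] -> (-1) ^+ ginv A B = 1 :> F.
Proof. by move=> pA AB; rewrite -signr_odd (negbTE (ginv_paired_even pA AB)). Qed.

End Paired.

Section PairedMonomials.
Local Open Scope fset_scope.
Context {F : fieldType}.

Lemma gmul_gmono_paired A B (c d : F) : paired A -> [disjoint A & B] ->
  gmul (gmono A c) (gmono B d) = gmono (A `|` B) (c * d).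
Proof.
move=> pA AB; apply/fsfunP => S.
rewrite (gmulE (finsupp_gmono A c)) big_seq_fset1 !gmonoE eqxx.
have AUBA : (A `|` B) `\` A = B.
  apply/fsetP => x; rewrite !inE; case: (boolP (x \in A)) => //= xA.
  by rewrite (negbTE (fdisjointP AB _ xA)).
case: (eqVneq S (A `|` B)) => [->|SAB].
  by rewrite fsubsetUl AUBA eqxx signr_ginv_paired ?mul1r.
case: ifP => // AS; case: eqP => [SAB'|]; last by rewrite mulr0.
case/eqP: SAB; rewrite -SAB'; apply/fsetP => x; rewrite !inE.
by case: (boolP (x \in A)) => //= /(fsubsetP AS).
Qed.

Lemma foldl_gmul_gmono (T : eqType) (s : seq T) (U : T -> {fset nat})
    (c : T -> F) A c0 :
  paired A -> {in s, forall x, paired (U x)} ->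
  {in s, forall x, [disjoint A & U x]} ->
  pairwise (fun x y => [disjoint U x & U y]) s ->
  foldl (@gmul F) (gmono A c0) [seq gmono (U x) (c x) | x <- s] =
    gmono (A `|` \bigcup_(x <- s) U x) (c0 * \prod_(x <- s) c x).
Proof.
elim: s A c0 => [|x s IH] A c0 pA pU AU /=.
  by rewrite !big_nil fsetU0 mulr1.
case/andP => /allP xU sU; rewrite gmul_gmono_paired ?AU ?mem_head //.
rewrite IH ?big_cons ?fsetUA ?mulrA //.
- by apply: paired_fsetU => //; apply: pU; rewrite mem_head.
- by move=> y ys; apply: pU; rewrite inE ys orbT.
by move=> y ys; rewrite fdisjointUX AU ?xU // inE ys orbT.
Qed.

End PairedMonomials.

Section BlockPower.
Local Open Scope fset_scope.
Context {F : fieldType}.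
Variables (r : nat) (B : nat -> {fset nat}).
Hypothesis B_neq0 : forall j, (j < r)%N -> B j != fset0.
Hypothesis B_disjoint :
  forall j l, (j < r)%N -> (l < r)%N -> j != l -> [disjoint B j & B l].
Hypothesis B_paired : forall j, (j < r)%N -> paired (B j).

Definition blocks : {fset {fset nat}} := [fset B j | j in iota 0 r].

Definition gblocks : Grass F := [fsfun S in blocks => 1].

Definition blocks_in S := [seq j <- iota 0 r | B j `<=` S].

Definition block_covered S := S `<=` \bigcup_(j <- blocks_in S) B j.

Lemma finsupp_gblocks : finsupp gblocks `<=` blocks.
Proof. exact: finsupp_sub. Qed.

Lemma ghomog_gblocks d : (forall j, (j < r)%N -> gdeg (B j) = d) ->
  ghomog d gblocks.
Proof.
move=> degB S /(fsubsetP finsupp_gblocks) /imfsetP[j /= jr ->].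
by apply: degB; rewrite mem_iota in jr.
Qed.

Lemma mem_blocks_in l S : (l \in blocks_in S) = (l < r)%N && (B l `<=` S).
Proof. by rewrite mem_filter mem_iota andbC. Qed.

Lemma blocks_in0 : blocks_in fset0 = [::].
Proof.
apply/eqP; rewrite -size_eq0 size_filter -leqn0 leqNgt -has_count.
by apply/hasP => -[j]; rewrite mem_iota fsubset0 => /B_neq0 /negbTE ->.
Qed.

Lemma sum_blocks (G : {fset nat} -> F) :
  \sum_(A <- blocks) G A = \sum_(j <- iota 0 r) G (B j).
Proof.
rewrite big_imfset /=; last first.
  move=> j l; rewrite !mem_iota !add0n => jr lr Bjl; apply/eqP/negP => /negP jl.
  have /fdisjointP := B_disjoint _ _ jr lr jl; case/fset0Pn: (B_neq0 _ jr) => x xj.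
  by move/(_ x xj); rewrite -Bjl xj.
by rewrite undup_id ?iota_uniq.
Qed.

Lemma blocks_inD j S : (j < r)%N -> B j `<=` S ->
  blocks_in (S `\` B j) = [seq l <- blocks_in S | l != j].
Proof.
move=> jr jS; rewrite -filter_predI; apply: eq_in_filter => l; rewrite mem_iota /=.
move=> lr; case: (eqVneq l j) => [->|lj] /=.
  apply/negbTE/negP => /fsubsetP jSj; case/fset0Pn: (B_neq0 _ jr) => x xj.
  by have := jSj x xj; rewrite inE xj.
have /fdisjointP lj_disj := B_disjoint _ _ lr jr lj.
apply/fsubsetP/fsubsetP => lS x /[dup] xl /lS; rewrite ?inE.
  by case/andP.
by move=> ->; rewrite andbT lj_disj.
Qed.

Lemma block_coveredD j S : (j < r)%N -> B j `<=` S ->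
  block_covered (S `\` B j) = block_covered S.
Proof.
move=> jr jS; rewrite /block_covered blocks_inD //.
apply/fsubsetP/fsubsetP => covered x.
  move=> xS; case: (boolP (x \in B j)) => xj.
    by apply/bigfcupP; exists j; rewrite // mem_blocks_in jr jS.
  have /covered /bigfcupP[l] : x \in S `\` B j by rewrite inE xj.
  by rewrite mem_filter andbT => /andP[_ lS] xl; apply/bigfcupP; exists l; rewrite ?lS.
rewrite inE => /andP[xj /covered /bigfcupP[l /andP[lS _] xl]].
apply/bigfcupP; exists l => //; rewrite mem_filter lS.
by rewrite !andbT; apply/eqP => lj; move: xj; rewrite -lj xl.
Qed.

Lemma gblocksE j : (j < r)%N -> gblocks (B j) = 1.
Proof. by move=> jr; rewrite fsfun_fun in_imfset // mem_iota. Qed.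

(* A product of m blocks survives only if the blocks are distinct, and each set of m
   blocks arises in m! orders. *)
Lemma gexp_gblocks m S : gexp gblocks m S =
  if block_covered S && (size (blocks_in S) == m) then (m`!)%:R else 0.
Proof.
elim: m S => [|m IH] S.
  rewrite /gexp /= gone_gmono gmonoE fact0.
  have [->|S0] := eqVneq S fset0.
    by rewrite blocks_in0 /block_covered fsub0set.
  rewrite size_eq0; case: eqP => [noblocks|]; last by rewrite andbF.
  by rewrite /block_covered noblocks big_nil fsubset0 (negbTE S0).
rewrite /gexp iterS -/(gexp gblocks m) (gmulE finsupp_gblocks) sum_blocks.
transitivity (\sum_(j <- blocks_in S) (if block_covered S &&
    (size (blocks_in S) == m.+1) then (m`!)%:R else 0 : F)).
  rewrite big_filter [RHS]big_mkcond; apply: eq_big_seq => j.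
  rewrite mem_iota => /andP[_ jr]; case: ifP => //= jS.
  have jSj : [disjoint B j & S `\` B j] by apply/fdisjointP => x xj; rewrite inE xj.
  rewrite (signr_ginv_paired (B_paired _ jr) jSj) mul1r gblocksE // mul1r IH.
  rewrite block_coveredD // blocks_inD // -rem_filter ?filter_uniq ?iota_uniq //.
  have : j \in blocks_in S by rewrite mem_blocks_in jr jS.
  by move=> /[dup] /size_rem ->; case: (blocks_in S).
case: ifP => [/andP[_ /eqP sizeS]|_]; last by rewrite big1_eq.
by rewrite big_const_seq iter_addr_0 count_predT sizeS factS natrM mulr_natl.
Qed.

Lemma gexp_gblocks_top :
  gexp gblocks r = gmono (\bigcup_(j <- iota 0 r) B j) (r`!)%:R.
Proof.
apply/fsfunP => S; rewrite gexp_gblocks gmonoE.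
have -> : (size (blocks_in S) == r) = all (fun j => B j `<=` S) (iota 0 r).
  by rewrite all_count size_filter size_iota.
have [/[dup] /all_filterP allS /allP subS|notall] := boolP (all _ _).
  rewrite andbT /block_covered /blocks_in allS eqEfsubset.
  congr (if _ then _ else _); apply/esym/andb_idr => _.
  by apply/bigfcupsP => j jr _; apply: subS.
rewrite andbF; case: eqP => // SU; case/negP: notall; apply/allP => j jr.
by rewrite SU bigfcup_sup.
Qed.

End BlockPower.

Section VariableBlocks.
Local Open Scope fset_scope.

(* The indices [2q] and [2q+1] encode e_(2q+1), of degree 1, and e_(2q+2), of
   degree 0. *)
Definition pair_fset (Q : {fset nat}) : {fset nat} :=
  [fset q.*2 | q in Q] `|` [fset q.*2.+1 | q in Q].

Lemma half_doubleS n : (n.*2.+1)./2 = n.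
Proof. by rewrite -uphalfE uphalf_double. Qed.

Lemma mem_pair_fset Q x : (x \in pair_fset Q) = (x./2 \in Q).
Proof.
rewrite inE; apply/orP/idP => [[] /imfsetP[q /= qQ ->]|xQ].
- by rewrite doubleK.
- by rewrite half_doubleS.
rewrite -[x]odd_double_half; case: (odd x); [right|left];
  by apply/imfsetP; exists x./2.
Qed.

Lemma paired_pair_fset Q : paired (pair_fset Q).
Proof. by move=> n; rewrite !mem_pair_fset doubleK half_doubleS. Qed.

Lemma gdeg_pair_fset Q : gdeg (pair_fset Q) = #|` Q|.
Proof.
rewrite /gdeg -(size_map double Q); apply/perm_size/uniq_perm.
- by rewrite filter_uniq ?fset_uniq.
- by rewrite (map_inj_uniq (can_inj doubleK)) fset_uniq.
move=> x; rewrite mem_filter mem_pair_fset.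
apply/andP/mapP => [[evx xQ]|[q qQ ->]].
  by exists x./2; rewrite // -[LHS]odd_double_half (negbTE evx).
by rewrite odd_double doubleK.
Qed.

(* The [j]-th block of the value of x^i_t; injectivity of [pickle] makes all these
   blocks pairwise disjoint. *)
Definition var_block (i t j : nat) : {fset nat} :=
  pair_fset [fset choice.pickle (i, t, j, l) | l in iota 0 i].

Lemma gdeg_var_block i t j : gdeg (var_block i t j) = i.
Proof.
rewrite gdeg_pair_fset card_imfset /=; last first.
  by move=> l l' /(pcan_inj choice.pickleK) [].
by rewrite undup_id ?iota_uniq // size_iota.
Qed.

Lemma var_block_neq0 i t j : (0 < i)%N -> var_block i t j != fset0.
Proof.
move=> i_gt0; apply/fset0Pn; exists (choice.pickle (i, t, j, 0%N)).*2.
by rewrite mem_pair_fset doubleK; apply/imfsetP; exists 0%N; rewrite ?mem_iota.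
Qed.

Lemma var_block_disjoint i t j i' t' j' : (i, t, j) != (i', t', j') ->
  [disjoint var_block i t j & var_block i' t' j'].
Proof.
move=> neq; apply/fdisjointP => x; rewrite !mem_pair_fset => /imfsetP[l _ ->].
apply/imfsetP => -[l' _ /(pcan_inj choice.pickleK) [ii' tt' jj' _]].
by rewrite ii' tt' jj' eqxx in neq.
Qed.

Definition var_support (i t m : nat) : {fset nat} :=
  \bigcup_(j <- iota 0 m) var_block i t j.

Lemma paired_var_support i t m : paired (var_support i t m).
Proof. by apply: paired_bigfcup => j _; apply: paired_pair_fset. Qed.

Lemma var_support_disjoint i t i' t' m m' : (i, t) != (i', t') ->
  [disjoint var_support i t m & var_support i' t' m'].
Proof.
move=> neq; apply/fdisjointP => x /bigfcupP[j _ xj]; apply/bigfcupP => -[j' _ xj'].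
have /fdisjointP/(_ x xj) : [disjoint var_block i t j & var_block i' t' j'].
  by apply: var_block_disjoint; apply: contra neq => /eqP [-> -> _].
by rewrite xj'.
Qed.

Lemma gexp_var_blocks (F : fieldType) i t m : (0 < i)%N ->
  gexp (gblocks m (var_block i t) : Grass F) m =
  gmono (var_support i t m) (m`!)%:R.
Proof.
move=> i_gt0; apply: gexp_gblocks_top => [j _|j l _ _ jl|j _].
- exact: var_block_neq0.
- by apply: var_block_disjoint; rewrite xpair_eqE negb_and jl orbT.
- exact: paired_pair_fset.
Qed.

End VariableBlocks.

Lemma pchar_fact_neq0 (F : fieldType) p n :
  p \in [pchar F] -> (n < p)%N -> (n`!)%:R != 0 :> F.
Proof.
move=> pF n_lt_p; have p_pr := pcharf_prime pF.
rewrite -(dvdn_pcharf pF) fact_prod Euclid_dvd_prod // big_has.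
apply/hasP => -[i]; rewrite mem_index_iota ltnS => /andP[i_gt0 i_le_n].
by move/(dvdn_leq i_gt0); rewrite leqNgt (leq_ltn_trans i_le_n).
Qed.

Definition var_indices k (h : nat -> nat) :=
  [seq (i, t) | i <- iota 1 k, t <- iota 0 (h i)].

Lemma mem_var_indices k h x :
  x \in var_indices k h -> (1 <= x.1 <= k)%N && (x.2 < h x.1)%N.
Proof.
case/allpairsPdep => i [t [ik th ->]] /=.
by rewrite mem_iota add1n ltnS in ik; rewrite mem_iota in th; rewrite ik th.
Qed.

Lemma var_indices_uniq k h : uniq (var_indices k h).
Proof.
apply: allpairs_uniq_dep => [||[i t] [i' t'] _ _ [-> ->]] //; first exact: iota_uniq.
by move=> i _; apply: iota_uniq.
Qed.

Lemma gmonomial_evalE (F : fieldType) k h r (a : nat -> nat -> Grass F) :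
  gmonomial_eval k h r a =
  foldl (@gmul F) (gone F)
    [seq gexp (a x.1 x.2) (r x.1 x.2) | x <- var_indices k h].
Proof. by rewrite /gmonomial_eval map_allpairs. Qed.

Lemma leq_bigmax_exponent k (h : nat -> nat) (r : nat -> nat -> nat) i t :
  (1 <= i <= k)%N -> (t < h i)%N ->
  (r i t <= \max_(1 <= i < k.+1) \max_(t < h i) r i t)%N.
Proof.
move=> ik th; apply: (bigmaxn_sup_seq i); rewrite ?mem_index_iota ?ltnS //.
exact: (leq_bigmax (Ordinal th)).
Qed.

Lemma gmonomial_eval_var_blocks (F : fieldType) k h r :
  gmonomial_eval k h r (fun i t => gblocks (r i t) (var_block i t)) =
  foldl (@gmul F) (gone F)
    [seq gmono (var_support x.1 x.2 (r x.1 x.2)) ((r x.1 x.2)`!)%:R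
    | x <- var_indices k h].
Proof.
rewrite gmonomial_evalE; congr foldl; apply/eq_in_map => -[i t].
by case/mem_var_indices => /andP[/andP[i_gt0 _] _]; apply: gexp_var_blocks.
Qed.

Theorem mainTheorem9 (F : fieldType) (p k : nat) (h : nat -> nat)
    (r : nat -> nat -> nat) :
  (forall s : seq F, exists x : F, x \notin s) ->
  p \in [pchar F] -> (2 < p)%N ->
  (0 < k)%N ->
  (\max_(1 <= i < k.+1) \max_(t < h i) r i t < p)%N ->
  exists a : nat -> nat -> Grass F,
    (forall i t, (1 <= i <= k)%N -> (t < h i)%N -> ghomog i (a i t)) /\
    gmonomial_eval k h r a <> gzero F.
Proof.
move=> _ pF _ _ max_lt_p.
exists (fun i t => gblocks (r i t) (var_block i t)); split.
  move=> i t /andP[i_gt0 _] _; apply: ghomog_gblocks => j _; exact: gdeg_var_block.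
rewrite gmonomial_eval_var_blocks gone_gmono foldl_gmul_gmono.
- move/gmono_eq_gzero/eqP; apply/negP; rewrite mul1r prodf_seq_neq0.
  apply/allP => -[i t] /mem_var_indices /andP[ik th] /=.
  apply: pchar_fact_neq0 pF (leq_ltn_trans _ max_lt_p).
  exact: leq_bigmax_exponent.
- by move=> n; rewrite !inE.
- by move=> x _; apply: paired_var_support.
- by move=> x _; apply: fdisjoint0X.
have := var_indices_uniq k h; rewrite uniq_pairwise; apply: sub_pairwise.
by move=> [i t] [i' t'] /=; apply: var_support_disjoint.
Qed.
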